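(* Let $\mathcal{C}$ be a full reflective subcategory of $\mathsf{Top}$, closed under isomorphisms, which is contained in the category $\mathsf{Haus}$ of Hausdorff spaces and contains a two-point discrete space. Then the only object of $\mathcal{C}$ that is finitely generated with respect to embeddings is the empty space.
   Context: An embedding is an injective continuous map $m:X\to Y$ such that every open set of $X$ has the form $m^{-1}(U)$ for $U$ open in $Y$. An object $X$ of $\mathcal{C}$ is finitely generated w.r.t. embeddings if for every directed diagram $(Z_i)_{i\in I}$ in $\mathcal{C}$ (indexed by a directed poset, i.e. every finite subset has an upper bound) whose connecting morphisms $z_{i,j}$ are embeddings, with colimit cocone $c_i:Z_i\to Z$ in $\mathcal{C}$, every morphism $f:X\to Z$ factorizes as $f=c_i\cdot g$ for some $i$ and $g:X\to Z_i$, and if also $f=c_i\cdot g'$ then $z_{i,j}\cdot g=z_{i,j}\cdot g'$ for some connecting morphism $z_{i,j}$. *)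

From Stdlib Require List.
From mathcomp Require Import all_boot all_classical topology.
Set Implicit Arguments. Unset Strict Implicit. Unset Printing Implicit Defensive.
Local Open Scope classical_set_scope.

Definition embedding (X Y : topologicalType) (m : X -> Y) : Prop :=
  injective m /\ continuous m /\
  forall A : set X, open A -> exists U : set Y, open U /\ A = m @^-1` U.

Definition homeomorphic (X Y : topologicalType) : Prop :=
  exists (f : X -> Y) (g : Y -> X),
    continuous f /\ continuous g /\ (forall x, g (f x) = x) /\ (forall y, f (g y) = y).

(* A full subcategory of Top is given by a predicate on objects; it is full
   (all continuous maps between objects of C are morphisms of C). *)

Definition reflective (C : topologicalType -> Prop) : Prop :=
  forall X : topologicalType, exists (R : topologicalType) (eta : X -> R),
    C R /\ continuous eta /\
    forall (Y : topologicalType), C Y -> forall f : X -> Y, continuous f ->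
      exists g : R -> Y, continuous g /\ (forall x, g (eta x) = f x) /\
        (forall g' : R -> Y, continuous g' -> (forall x, g' (eta x) = f x) ->
           forall r, g' r = g r).

Definition iso_closed (C : topologicalType -> Prop) : Prop :=
  forall X Y : topologicalType, C X -> homeomorphic X Y -> C Y.

Definition directed_poset (I : Type) (le : I -> I -> Prop) : Prop :=
  (forall i, le i i) /\
  (forall i j k, le i j -> le j k -> le i k) /\
  (forall i j, le i j -> le j i -> i = j) /\
  (forall s : list I, exists k, forall i, List.In i s -> le i k).

Definition is_diagram (I : Type) (le : I -> I -> Prop)
    (Z : I -> topologicalType) (z : forall i j, le i j -> Z i -> Z j) : Prop :=
  (forall i j (h : le i j), continuous (z i j h)) /\
  (forall i (h : le i i) x, z i i h x = x) /\
  (forall i j k (h1 : le i j) (h2 : le j k) (h3 : le i k) x,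
      z j k h2 (z i j h1 x) = z i k h3 x).

Definition is_cocone (I : Type) (le : I -> I -> Prop)
    (Z : I -> topologicalType) (z : forall i j, le i j -> Z i -> Z j)
    (W : topologicalType) (d : forall i, Z i -> W) : Prop :=
  (forall i, continuous (d i)) /\
  (forall i j (h : le i j) x, d j (z i j h x) = d i x).

Definition is_colimit_in (C : topologicalType -> Prop) (I : Type)
    (le : I -> I -> Prop) (Z : I -> topologicalType)
    (z : forall i j, le i j -> Z i -> Z j)
    (Zc : topologicalType) (c : forall i, Z i -> Zc) : Prop :=
  C Zc /\ is_cocone z c /\
  forall (W : topologicalType) (d : forall i, Z i -> W), C W -> is_cocone z d ->
    exists u : Zc -> W, continuous u /\ (forall i x, u (c i x) = d i x) /\
      (forall u' : Zc -> W, continuous u' -> (forall i x, u' (c i x) = d i x) ->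
         forall y, u' y = u y).

Definition fg_wrt_embeddings (C : topologicalType -> Prop) (X : topologicalType)
  : Prop :=
  forall (I : Type) (le : I -> I -> Prop) (Z : I -> topologicalType)
         (z : forall i j, le i j -> Z i -> Z j)
         (Zc : topologicalType) (c : forall i, Z i -> Zc),
    directed_poset le -> (forall i, C (Z i)) -> is_diagram z ->
    (forall i j (h : le i j), embedding (z i j h)) ->
    is_colimit_in C z c ->
    forall f : X -> Zc, continuous f ->
      (exists i (g : X -> Z i), continuous g /\ forall x, f x = c i (g x)) /\
      (forall i (g g' : X -> Z i), continuous g -> continuous g' ->
         (forall x, f x = c i (g x)) -> (forall x, f x = c i (g' x)) ->
         exists j (h : le i j), forall x, z i j h (g x) = z i j h (g' x)).

From HB Require Import structures.
From mathcomp Require Import all_boot all_classical topology.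
From Stdlib Require List.
Set Implicit Arguments. Unset Strict Implicit. Unset Printing Implicit Defensive.
Local Open Scope classical_set_scope.

(* Glue the points pa, pb and px t m (t : nat -> nat -> bool,
   m : nat) from a directed family of stages: stage (F, n), for F a finite set
   of codes, contains the px t m with t in F or m <= n; its points px are
   isolated, pa is the limit of the sequences (px t m)_m for t in F, and pb is
   the limit of the cofinite filter on the px t m with m <= n.  A stage is
   zero-dimensional and compact, so every clopen ultrafilter coming from a point
   of its C-reflection is principal; using maps into the two-point discrete
   space this makes the stage its own reflection, hence an object of C.  In the union, a diagonal argument shows
   that every neighbourhood of pa meets every neighbourhood of pb, so the
   Hausdorff C-colimit (the reflection of the union) identifies pa and pb.  For
   X nonempty, the constant maps X -> stage to pa and to pb thus agree in the
   colimit but in no stage, so X is not finitely generated. *)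

(** * Reflections and clopen sets *)

Lemma open_of_local (Y : topologicalType) (P : set Y) :
  (forall y, P y -> exists2 O, open O & O y /\ O `<=` P) -> open P.
Proof.
by move=> hP; rewrite openE => y /hP [O oO [Oy OP]]; rewrite /interior nbhsE; exists O.
Qed.

(* The library's [clopenC] takes a spurious extra set argument. *)
Lemma clopen_setC (Y : topologicalType) (A : set Y) : clopen A -> clopen (~` A).
Proof. exact: clopenC A. Qed.

Definition indicator (Y Z : Type) (S : set Y) (u v : Z) (y : Y) : Z :=
  if `[< S y >] then v else u.

Lemma clopen_indicator_continuous (Y Z : topologicalType) (S : set Y) (u v : Z) :
  clopen S -> continuous (indicator S u v).
Proof.
move=> [oS cS] y; apply: (near_cst_continuous (indicator S u v y)).
have [Sy|nSy] := pselect (S y).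
  apply: filterS (open_nbhs_nbhs (conj oS Sy)) => y' Sy'.
  by rewrite /indicator !asboolT.
have oNS : open (~` S) by rewrite openC.
apply: filterS (open_nbhs_nbhs (conj oNS nSy)) => y' nSy'.
by rewrite /indicator !asboolF.
Qed.

Definition list_cap (I Y : Type) (L : list I) (A : I -> set Y) : set Y :=
  [set y | forall k, List.In k L -> A k y].

Lemma list_cap_nil (I Y : Type) (A : I -> set Y) : list_cap [::] A = setT.
Proof. by apply/seteqP; split => // y _ k []. Qed.

Lemma list_cap_cons (I Y : Type) (k : I) (L : list I) (A : I -> set Y) :
  list_cap (k :: L) A = A k `&` list_cap L A.
Proof.
apply/seteqP; split=> [y hy|y [Aky hy] k' [<-|/hy]] //.
by split=> [|k' Lk']; apply: hy; [left|right].
Qed.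

Lemma clopen_list_cap (Y : topologicalType) (I : Type) (L : list I)
    (A : I -> set Y) :
  (forall k, clopen (A k)) -> clopen (list_cap L A).
Proof.
move=> cA; elim: L => [|k L IH]; first by rewrite list_cap_nil; exact: clopenT.
by rewrite list_cap_cons; exact: clopenI.
Qed.

Lemma continuous_cluster (Y Z : topologicalType) (f : Y -> Z) (p q : Y) :
  continuous f -> cluster (nbhs p) q -> cluster (nbhs (f p)) (f q).
Proof.
move=> cf pq A B /(cf p) fA /(cf q) fB.
by have [y [Ay By]] := pq _ _ fA fB; exists (f y).
Qed.

Definition is_reflection (C : topologicalType -> Prop) (X R : topologicalType)
    (eta : X -> R) : Prop :=
  C R /\ continuous eta /\
  forall Y : topologicalType, C Y -> forall f : X -> Y, continuous f ->
    exists g : R -> Y, continuous g /\ (forall x, g (eta x) = f x) /\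
      (forall g' : R -> Y, continuous g' -> (forall x, g' (eta x) = f x) ->
         forall r, g' r = g r).

Definition has_discrete_pair (C : topologicalType -> Prop) : Prop :=
  exists (T : topologicalType) (a b : T),
    [/\ C T, a <> b & forall A : set T, open A].

Section Reflection.
Variables (C : topologicalType -> Prop) (X R : topologicalType) (eta : X -> R).

(* When C has a discrete pair, [eta @^-1`] is a bijection between the clopen
   sets of R and those of X; the A over which r lies form a clopen ultrafilter
   of X. *)
Definition lies_over (r : R) (A : set X) :=
  exists2 S, clopen S & eta @^-1` S = A /\ S r.

Hypothesis reta : is_reflection C eta.

Lemma reflection_ext_uniq (W : topologicalType) (g1 g2 : R -> W) :
  C W -> continuous g1 -> continuous g2 ->
  (forall x, g1 (eta x) = g2 (eta x)) -> g1 = g2.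
Proof.
have [_ [ceta ext]] := reta; move=> CW cg1 cg2 e.
have cf : continuous (g2 \o eta).
  by move=> x; apply: continuous_comp; [exact: ceta|exact: cg2].
have [g [_ [_ gu]]] := ext W CW _ cf.
by apply/funext => r; rewrite (gu g1) // (gu g2).
Qed.

Lemma reflection_retract_in (psi : R -> X) :
  iso_closed C -> continuous psi -> (forall x, psi (eta x) = x) -> C X.
Proof.
have [CR [ceta _]] := reta; move=> isoC cpsi psiK.
have etaK : eta \o psi = id.
  apply: reflection_ext_uniq => // [r|r|x]; last by rewrite /= psiK.
    by apply: continuous_comp; [exact: cpsi|exact: ceta].
  exact: cvg_id.
apply: (isoC R X CR); exists psi, eta; do 2!split => //.
by split => // r; rewrite -[RHS](congr1 (@^~ r) etaK).
Qed.

Lemma reflection_colimit (I : Type) (le : I -> I -> Prop)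
    (Z : I -> topologicalType) (z : forall i j, le i j -> Z i -> Z j)
    (v : forall i, Z i -> X) :
  is_colimit_in (fun _ => True) z v -> is_colimit_in C z (fun i x => eta (v i x)).
Proof.
have [CR [ceta ext]] := reta.
move=> [_ [[cv vz] univ]]; split => //; split.
  split=> [i x|i j h x]; last by rewrite vz.
  by apply: continuous_comp; [exact: cv|exact: ceta].
move=> W d CW [cd dz].
have [u0 [cu0 [u0v u0uniq]]] := univ W d Logic.I (conj cd dz).
have [g [cg [geta guniq]]] := ext W CW u0 cu0.
exists g; split => //; split=> [i x|u' cu' u'v]; first by rewrite geta u0v.
apply: guniq => // x; apply: (u0uniq (u' \o eta)) => [y|//].
by apply: continuous_comp; [exact: ceta|exact: cu'].
Qed.

Hypothesis pairC : has_discrete_pair C.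

Lemma reflection_clopen_full (S : set R) :
  clopen S -> (forall x, S (eta x)) -> forall r, S r.
Proof.
have [T [a [b [CT ab _]]]] := pairC; move=> cS Seta r; apply: contrapT => nSr.
have chiE : indicator S a b = fun=> b.
  apply: reflection_ext_uniq => //; first exact: clopen_indicator_continuous.
    exact: cst_continuous.
  by move=> x; rewrite /indicator asboolT.
by apply: ab; have := congr1 (@^~ r) chiE; rewrite /indicator asboolF.
Qed.

Lemma reflection_clopen_sub (S1 S2 : set R) :
  clopen S1 -> clopen S2 -> eta @^-1` S1 `<=` eta @^-1` S2 -> S1 `<=` S2.
Proof.
move=> cS1 cS2 sub12 r S1r.
have cS : clopen (~` S1 `|` S2) by apply: clopenU => //; exact: clopen_setC.
have Seta x : (~` S1 `|` S2) (eta x).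
  by have [/sub12|] := pselect (S1 (eta x)); [right|left].
by case: (reflection_clopen_full cS Seta r).
Qed.

Lemma reflection_clopen_lift (A : set X) :
  clopen A -> exists2 S, clopen S & eta @^-1` S = A.
Proof.
have [T [a [b [CT ab T_discrete]]]] := pairC; have [_ [_ ext]] := reta.
move=> cA.
have [g [cg [geta _]]] := ext T CT (indicator A a b) (clopen_indicator_continuous cA).
exists (g @^-1` [set b]).
  by apply: preimage_clopen cg; split; [exact: T_discrete|rewrite -openC].
apply/funext => x; apply/propext; rewrite /preimage /= geta /indicator.
split=> [|Ax]; last by rewrite asboolT.
by case: (pselect (A x)) => [//|/asboolF -> /ab].
Qed.

Lemma lies_overP (S : set R) (r : R) :
  clopen S -> lies_over r (eta @^-1` S) <-> S r.
Proof.
move=> cS; split=> [[S' cS' [e S'r]]|Sr]; last by exists S.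
by apply: (reflection_clopen_sub cS' cS) => //; rewrite e.
Qed.

Lemma lies_over_eta (A : set X) (x : X) : clopen A -> lies_over (eta x) A <-> A x.
Proof. by move=> /reflection_clopen_lift [S cS <-]; exact: lies_overP. Qed.

Lemma lies_over_sub (r : R) (A B : set X) :
  clopen B -> A `<=` B -> lies_over r A -> lies_over r B.
Proof.
move=> /reflection_clopen_lift [S2 cS2 <-] AB [S1 cS1 [e S1r]].
by apply/(lies_overP _ cS2); apply: (reflection_clopen_sub cS1 cS2) S1r; rewrite e.
Qed.

Lemma lies_over_neq0 (r : R) (A : set X) : lies_over r A -> A !=set0.
Proof.
move=> [S cS [<- Sr]]; apply: contrapT => nS.
by apply: (reflection_clopen_sub cS clopen0 _ Sr) => x Sx; apply: nS; exists x.
Qed.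

Lemma lies_overI (r : R) (A B : set X) :
  lies_over r A -> lies_over r B -> lies_over r (A `&` B).
Proof.
by move=> [S1 c1 [<- r1]] [S2 c2 [<- r2]]; exists (S1 `&` S2); [exact: clopenI|].
Qed.

Lemma lies_overC (r : R) (A : set X) :
  clopen A -> lies_over r (~` A) <-> ~ lies_over r A.
Proof.
move=> /reflection_clopen_lift [S cS <-].
have cNS : clopen (~` S) by exact: clopen_setC.
split=> [/(lies_overP _ cNS) NSr /(lies_overP _ cS) //|nS].
by apply/(lies_overP _ cNS) => Sr; apply: nS; apply/lies_overP.
Qed.

Lemma lies_over_list_cap (I : Type) (L : list I) (A : I -> set X) (r : R) :
  (forall k, List.In k L -> lies_over r (A k)) -> lies_over r (list_cap L A).
Proof.
elim: L => [_|k L IH rA].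
  by rewrite list_cap_nil; exists setT; [exact: clopenT|].
rewrite list_cap_cons; apply: lies_overI; first by apply: rA; left.
by apply: IH => k' Lk'; apply: rA; right.
Qed.

(* The point realizing r is the image of r under the inverse of eta. *)
Lemma realized_in_C :
  iso_closed C ->
  (forall x (Q : set X), open Q -> Q x -> exists2 A, clopen A & A x /\ A `<=` Q) ->
  (forall x y : X, x <> y -> exists2 A, clopen A & A x /\ ~ A y) ->
  (forall r, exists x, forall A, clopen A -> A x -> lies_over r A) -> C X.
Proof.
move=> isoC basis sep /choice [psi psiP].
have psiE r A : clopen A -> A (psi r) <-> lies_over r A.
  move=> cA; split; first exact: psiP.
  move=> rA; apply: contrapT => nA.
  exact: (lies_overC r cA).1 (psiP r _ (clopen_setC cA) nA) rA.
apply: (@reflection_retract_in psi) => // [|x].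
  apply/continuousP => Q oQ; apply: open_of_local => r Qpsir.
  have [A cA [Apsir AQ]] := basis _ _ oQ Qpsir.
  have [S cS [SA Sr]] := psiP r _ cA Apsir.
  exists S; first by case: cS.
  split=> // r' Sr'; apply/AQ/(psiE r' A cA); rewrite -SA; exact/lies_overP.
apply: contrapT => /sep [A cA [Apsi nAx]]; apply: nAx.
by apply/(lies_over_eta x cA); exact: psiP.
Qed.

End Reflection.

(** * The stages *)

Definition code := nat -> nat -> bool.

Lemma code_diagonal (H : nat -> list code) :
  exists t : code, forall m, ~ List.In t (H m).
Proof.
pose d0 : code := fun _ _ => false.
exists (fun m k => ~~ List.nth k (H m) d0 m k) => m /(List.In_nth _ _ d0) [k [_ ek]].
by have := congr1 (fun t : code => t m k) ek; case: (List.nth k (H m) d0 m k).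
Qed.

Inductive point := pa | pb | px of code & nat.
HB.instance Definition _ := gen_eqMixin point.
HB.instance Definition _ := gen_choiceMixin point.

Definition list_finite (A : Type) (F : set A) :=
  exists s : list A, forall x, F x -> List.In x s.

Lemma list_finite0 (A : Type) : list_finite (@set0 A).
Proof. by exists [::]. Qed.

Lemma list_finite1 (A : Type) (x : A) : list_finite [set x].
Proof. by exists [:: x] => y ->; left. Qed.

Lemma list_finiteU (A : Type) (F G : set A) :
  list_finite F -> list_finite G -> list_finite (F `|` G).
Proof.
move=> [s hs] [s' hs']; exists (s ++ s') => x Fx; apply: List.in_or_app.
by case: Fx => [/hs|/hs']; [left|right].
Qed.

Definition index := ({F : set code | list_finite F} * nat)%type.
Definition codes (i : index) : set code := sval i.1.
Definition depth (i : index) : nat := i.2.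
Definition index_le (i j : index) := codes i `<=` codes j /\ (depth i <= depth j)%N.

Lemma index_directed : directed_poset index_le.
Proof.
split; first by move=> i; split.
split.
  move=> i j k [Fij nij] [Fjk njk].
  by split; [exact: subset_trans Fjk|exact: leq_trans njk].
split.
  move=> [[F hF] n] [[G hG] n'] [/= FG nn'] [/= GF n'n].
  have eFG : F = G by apply/seteqP; split.
  subst G; rewrite (Prop_irrelevance hF hG); congr (_, _).
  by apply/eqP; rewrite eqn_leq nn' n'n.
elim=> [|i s [k hk]]; first by exists (exist _ set0 (list_finite0 _), 0%N).
exists (exist _ (codes i `|` codes k) (list_finiteU (svalP i.1) (svalP k.1)),
        maxn (depth i) (depth k)).
move=> j [<-|/hk [Fjk njk]]; split=> /=; first by move=> t; left.
- exact: leq_maxl.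
- by move=> t /Fjk; right.
- exact: leq_trans njk (leq_maxr _ _).
Qed.

Definition in_stage (i : index) (p : point) : Prop :=
  if p is px t m then codes i t \/ (m <= depth i)%N else True.

Record stage (i : index) : Type :=
  Stage { spoint : point; stage_mem : in_stage i spoint }.
HB.instance Definition _ (i : index) := gen_eqMixin (stage i).
HB.instance Definition _ (i : index) := gen_choiceMixin (stage i).

Lemma stage_inj (i : index) (x y : stage i) : spoint x = spoint y -> x = y.
Proof.
by case: x => p hp; case: y => q hq /= e; subst q; congr Stage; exact: Prop_irrelevance.
Qed.

Definition stage_pa (i : index) : stage i := @Stage i pa Logic.I.
Definition stage_pb (i : index) : stage i := @Stage i pb Logic.I.

(* The points px are isolated; the neighbourhoods of pa contain a tail
   m >= K of the points px t m with m > depth i (whose t is then in codes i),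
   those of pb all px t m with m <= depth i but for finitely many t. *)
Definition stage_open (i : index) (Q : set (stage i)) : Prop :=
  (Q (stage_pa i) -> exists K, forall z t m, spoint z = px t m ->
     (depth i < m)%N -> (K <= m)%N -> Q z) /\
  (Q (stage_pb i) -> exists H : list code, forall z t m, spoint z = px t m ->
     (m <= depth i)%N -> ~ List.In t H -> Q z).
Arguments stage_open : clear implicits.

Lemma stage_openT (i : index) : stage_open i setT.
Proof. by split=> _; [exists 0%N|exists [::]]. Qed.

Lemma stage_openI (i : index) : setI_closed (stage_open i).
Proof.
move=> A B [Aa Ab] [Ba Bb].
split=> [[/Aa [K1 h1] /Ba [K2 h2]]|[/Ab [H1 h1] /Bb [H2 h2]]].
  exists (maxn K1 K2) => z t m e lt; rewrite geq_max => /andP[K1m K2m].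
  by split; [exact: h1 e lt K1m|exact: h2 e lt K2m].
exists (H1 ++ H2) => z t m e le nH.
by split; [apply: h1 e le _|apply: h2 e le _] => hH; apply: nH;
  apply: List.in_or_app; [left|right].
Qed.

Lemma stage_openU (i : index) (J : Type) (f : J -> set (stage i)) :
  (forall j, stage_open i (f j)) -> stage_open i (\bigcup_j f j).
Proof.
move=> fo; split=> -[j _ fj]; have [ha hb] := fo j.
  have [K hK] := ha fj.
  by exists K => z t m e lt Km; exists j => //; exact: hK e lt Km.
have [H hH] := hb fj.
by exists H => z t m e le nH; exists j => //; exact: hH e le nH.
Qed.

HB.instance Definition _ (i : index) :=
  isOpenTopological.Build (stage i) (@stage_openT i) (@stage_openI i) (@stage_openU i).

Section Stage.
Context {i : index}.

Definition at_px (tm : code * nat) : set (stage i) :=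
  [set z | spoint z = px tm.1 tm.2].

Definition stage_low : set (stage i) :=
  [set z | match spoint z with
           | pa => False | pb => True | px _ m => (m <= depth i)%N end].

Definition avoiding (L : list (code * nat)) : set (stage i) :=
  list_cap L (fun tm => ~` at_px tm).

Lemma clopen_at_px (tm : code * nat) : clopen (at_px tm).
Proof.
split; first by split=> /=.
rewrite -openC; split=> _.
  exists tm.2.+1 => z t m e _ + /=; rewrite /at_px /= e => Km -[_ em].
  by move: Km; rewrite em ltnn.
exists [:: tm.1] => z t m e _ nt /=; rewrite /at_px /= e => -[et _].
by apply: nt; left.
Qed.

Lemma clopen_stage_low : clopen stage_low.
Proof.
split.
  by split=> //= _; exists [::] => z t m e le _; rewrite /stage_low /= e.
rewrite -openC; split=> [_|nlow]; last by case: nlow.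
by exists 0%N => z t m e lt _; rewrite /setC /stage_low /= e leqNgt lt.
Qed.

Lemma clopen_avoiding (L : list (code * nat)) : clopen (avoiding L).
Proof. by apply: clopen_list_cap => tm; exact/clopen_setC/clopen_at_px. Qed.

Lemma stage_open_pa (Q : set (stage i)) :
  open Q -> Q (stage_pa i) -> exists L, ~` stage_low `&` avoiding L `<=` Q.
Proof.
move=> [hpa _] Qpa; have [K hK] := hpa Qpa; have [sF hsF] := svalP i.1.
exists (List.list_prod sF (List.seq 0 K)) => z [nlow av].
move: nlow; rewrite /setC /stage_low /=; case ez: (spoint z) => [| |t m].
- by move=> _; rewrite (stage_inj (y:=stage_pa i) ez).
- by case.
move/negP; rewrite -ltnNge => ltm; apply: (hK z t m ez ltm).
rewrite leqNgt; apply/negP => mK.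
have Ft : codes i t by have := stage_mem z; rewrite ez /= leqNgt ltm => -[].
apply: (av (t, m)); last by rewrite /at_px /= ez.
apply: List.in_prod; first exact: hsF.
by apply/List.in_seq; split; [exact/leP|exact/ltP].
Qed.

Lemma stage_open_pb (Q : set (stage i)) :
  open Q -> Q (stage_pb i) -> exists L, stage_low `&` avoiding L `<=` Q.
Proof.
move=> [_ hpb] Qpb; have [H hH] := hpb Qpb.
exists (List.list_prod H (List.seq 0 (depth i).+1)) => z [low av].
move: low; rewrite /stage_low /=; case ez: (spoint z) => [| |t m] // lem.
  by rewrite (stage_inj (y:=stage_pb i) ez).
apply: (hH z t m ez lem) => Ht; apply: (av (t, m)); last by rewrite /at_px /= ez.
by apply: List.in_prod => //; apply/List.in_seq; split; [exact/leP|exact/ltP].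
Qed.

Lemma stage_clopen_basis (z : stage i) (Q : set (stage i)) :
  open Q -> Q z -> exists2 A, clopen A & A z /\ A `<=` Q.
Proof.
move=> oQ; case ez: (spoint z) => [| |t m].
- rewrite (stage_inj (y:=stage_pa i) ez) => /(stage_open_pa oQ) [L sub].
  exists (~` stage_low `&` avoiding L); last by split=> //; split=> // tm _.
  by apply: clopenI; [exact/clopen_setC/clopen_stage_low|exact: clopen_avoiding].
- rewrite (stage_inj (y:=stage_pb i) ez) => /(stage_open_pb oQ) [L sub].
  exists (stage_low `&` avoiding L); last by split=> //; split=> // tm _.
  by apply: clopenI; [exact: clopen_stage_low|exact: clopen_avoiding].
- move=> Qz; exists (at_px (t, m)); first exact: clopen_at_px.
  by split=> // z' ez'; rewrite (stage_inj (etrans ez' (esym ez))).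
Qed.

Lemma stage_separation (x y : stage i) :
  x <> y -> exists2 A, clopen A & A x /\ ~ A y.
Proof.
move=> xy.
have sep_px t m : spoint y = px t m -> exists2 A, clopen A & A x /\ ~ A y.
  move=> ey; exists (~` at_px (t, m)); first exact/clopen_setC/clopen_at_px.
  split=> [ex|]; last by apply; rewrite /at_px /= ey.
  by apply: xy; apply: stage_inj; rewrite ey.
case ex: (spoint x) => [| |t m]; case ey: (spoint y) => [| |t' m'];
  try exact: sep_px ey; try by case: xy; apply: stage_inj; rewrite ex ey.
- exists (~` stage_low); first exact/clopen_setC/clopen_stage_low.
  by rewrite /setC /stage_low /= ex ey; split=> [[]|/(_ Logic.I)].
- exists stage_low; first exact: clopen_stage_low.
  by rewrite /stage_low /= ex ey; split=> // [].
- exists (at_px (t, m)); first exact: clopen_at_px.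
  by rewrite /at_px /= ex ey.
- exists (at_px (t, m)); first exact: clopen_at_px.
  by rewrite /at_px /= ex ey.
Qed.

End Stage.

Lemma in_stage_le (i j : index) (p : point) :
  index_le i j -> in_stage i p -> in_stage j p.
Proof.
move=> [Fij nij]; case: p => //= t m [/Fij Ft|lem]; [left|right] => //.
exact: leq_trans nij.
Qed.

Definition stage_map (i j : index) (h : index_le i j) (x : stage i) : stage j :=
  @Stage j (spoint x) (in_stage_le h (stage_mem x)).

Lemma stage_map_continuous (i j : index) (h : index_le i j) :
  continuous (stage_map h).
Proof.
apply/continuousP => Q [Qa Qb]; split.
  rewrite /preimage /= (_ : stage_map h _ = stage_pa j); last exact: stage_inj.
  move=> /Qa [K hK]; exists (maxn K (depth j).+1) => z t m ez _.
  rewrite geq_max => /andP[Km ltjm].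
  exact: (hK (stage_map h z) t m ez ltjm Km).
rewrite /preimage /= (_ : stage_map h _ = stage_pb j); last exact: stage_inj.
move=> /Qb [H hH]; exists H => z t m ez lem; apply: (hH (stage_map h z) t m ez).
exact: leq_trans lem h.2.
Qed.

Lemma stage_map_embedding (i j : index) (h : index_le i j) :
  embedding (stage_map h).
Proof.
split; first by move=> x y e; apply: stage_inj; exact: (congr1 (@spoint j) e).
split; first exact: stage_map_continuous.
move=> Q [Qa Qb].
exists [set y : stage j | forall x : stage i, spoint x = spoint y -> Q x].
split; last first.
  apply/seteqP; split=> [x Qx x' /stage_inj -> //|x /(_ x erefl) //].
have [sF hsF] := svalP i.1.
split=> [/(_ (stage_pa i) erefl) /Qa [K hK]|/(_ (stage_pb i) erefl) /Qb [H hH]].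
  exists K => y t m ey ltm Km x ex; apply: (hK x t m (etrans ex ey) _ Km).
  exact: leq_ltn_trans h.2 ltm.
exists (H ++ sF) => y t m ey lem nin x ex.
have := stage_mem x; rewrite ex ey => -[Ft|lemi].
  by case: nin; apply: List.in_or_app; right; exact: hsF.
apply: (hH x t m (etrans ex ey) lemi) => Ht.
by apply: nin; apply: List.in_or_app; left.
Qed.

Lemma stage_diagram : is_diagram stage_map.
Proof.
split; first exact: stage_map_continuous.
by split=> [i h x|i j k h1 h2 h3 x]; apply: stage_inj.
Qed.

Lemma stage_realized (C : topologicalType -> Prop) (i : index)
    (R : topologicalType) (eta : stage i -> R) :
  is_reflection C eta -> has_discrete_pair C ->
  forall r, exists x, forall A, clopen A -> A x -> lies_over eta r A.
Proof.
move=> reta pairC r.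
have [[tm rtm]|nrpx] := pselect (exists tm, lies_over eta r (at_px tm)).
  have [x xtm] := lies_over_neq0 reta pairC rtm.
  exists x => A cA Ax; apply: (lies_over_sub reta pairC cA _ rtm) => z ztm.
  by rewrite (stage_inj (etrans ztm (esym xtm))).
have ravoid L : lies_over eta r (avoiding L).
  apply: lies_over_list_cap => tm _.
  apply/(lies_overC reta pairC r (clopen_at_px tm)) => rtm.
  by apply: nrpx; exists tm.
have [rlow|rhigh] := pselect (lies_over eta r stage_low).
  exists (stage_pb i) => A cA /(stage_open_pb (proj1 cA)) [L sub].
  exact: (lies_over_sub reta pairC cA sub (lies_overI rlow (ravoid L))).
have rhigh' := (lies_overC reta pairC r clopen_stage_low).2 rhigh.
exists (stage_pa i) => A cA /(stage_open_pa (proj1 cA)) [L sub].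
exact: (lies_over_sub reta pairC cA sub (lies_overI rhigh' (ravoid L))).
Qed.

Lemma stage_in_C (C : topologicalType -> Prop) (i : index) :
  reflective C -> iso_closed C -> has_discrete_pair C -> C (stage i).
Proof.
move=> reflC isoC pairC; have [R [eta reta]] := reflC (stage i).
apply: (realized_in_C reta pairC isoC) => [x Q|x y|r].
- exact: stage_clopen_basis.
- exact: stage_separation.
- exact: stage_realized reta pairC r.
Qed.

(** * The glued space *)

Definition glued_open (O : set point) : Prop :=
  forall i, stage_open i [set z : stage i | O (spoint z)].

Lemma glued_openT : glued_open setT.
Proof. by move=> i; exact: stage_openT. Qed.

Lemma glued_openI : setI_closed glued_open.
Proof. by move=> A B hA hB i; exact: stage_openI. Qed.

Lemma glued_openU (J : Type) (f : J -> set point) :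
  (forall j, glued_open (f j)) -> glued_open (\bigcup_j f j).
Proof. by move=> fo i; apply: stage_openU => j; exact: fo. Qed.

HB.instance Definition _ :=
  isOpenTopological.Build point glued_openT glued_openI glued_openU.

Lemma glued_openE (O : set point) : open O = glued_open O.
Proof. by []. Qed.

Definition point_index (p : point) : index :=
  (exist _ set0 (list_finite0 _), if p is px _ m then m else 0%N).

Definition point_stage (p : point) : stage (point_index p) :=
  @Stage (point_index p) p (if p is px _ _ then or_intror (leqnn _) else Logic.I).

Lemma stage_colimit : is_colimit_in (fun _ => True) stage_map (@spoint).
Proof.
split=> //; split.
  by split=> [i|//]; apply/continuousP => O /(_ i).
move=> W d _ [cd dz].
have d_point i (x : stage i) : d i x = d _ (point_stage (spoint x)).
  have [_ [_ [_ ub]]] := index_directed.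
  have [k hk] := ub [:: i; point_index (spoint x)].
  have hi : index_le i k by apply: hk; left.
  have hp : index_le (point_index (spoint x)) k by apply: hk; right; left.
  by rewrite -(dz _ _ hi) -(dz _ _ hp); congr (d k _); apply: stage_inj.
exists (fun p => d _ (point_stage p)); split.
  apply/continuousP => O oO; rewrite glued_openE => i.
  have -> : [set z : stage i | O (d _ (point_stage (spoint z)))] = d i @^-1` O.
    by apply/funext => z; rewrite /preimage /= (d_point i z).
  exact: (proj1 (continuousP _) (cd i) O oO).
split=> [i x|u' _ u'd p]; first by rewrite -d_point.
exact: u'd _ (point_stage p).
Qed.

Lemma pa_pb_cluster : cluster (nbhs pa) pb.
Proof.
move=> A B; rewrite !nbhsE /= => -[V [oV Va] VA] [W [oW Wb] WB].
have hV t : exists K, forall m, (0 < m)%N -> (K <= m)%N -> V (px t m).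
  pose it : index := (exist _ [set t] (list_finite1 t), 0%N).
  have [hpa _] := oV it; have [K hK] := hpa Va.
  exists K => m m0 Km.
  exact: (hK (@Stage it (px t m) (or_introl erefl)) t m erefl m0 Km).
have hW m : exists H : list code, forall t, ~ List.In t H -> W (px t m).
  pose im : index := (exist _ set0 (list_finite0 _), m).
  have [_ hpb] := oW im; have [H hH] := hpb Wb.
  exists H => t nt.
  exact: (hH (@Stage im (px t m) (or_intror (leqnn m))) t m erefl (leqnn m) nt).
have [Kf hKf] := choice hV; have [Hf hHf] := choice hW.
have [t ht] := code_diagonal Hf.
exists (px t (maxn (Kf t) 1)); split; [apply: VA|apply: WB]; last exact: hHf.
by apply: hKf; [exact: leq_maxr|exact: leq_maxl].
Qed.

Lemma empty_fg_wrt_embeddings (C : topologicalType -> Prop)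
    (X : topologicalType) :
  (X -> False) -> fg_wrt_embeddings C X.
Proof.
move=> X0 I le Z z Zc c [le_refl [_ [_ ub]]] _ _ _ _ f _; split.
  have [k _] := ub [::]; exists k, (fun x => False_rect _ (X0 x)).
  by split=> x; case: (X0 x).
by move=> i g g' _ _ _ _; exists i, (le_refl i) => x; case: (X0 x).
Qed.

Theorem theorem7p9 (C : topologicalType -> Prop) :
  reflective C -> iso_closed C ->
  (forall X, C X -> hausdorff_space X) ->
  (exists T : topologicalType, C T /\
     (exists a b : T, a <> b /\ forall x, x = a \/ x = b) /\
     (forall A : set T, open A)) ->
  forall X : topologicalType, C X ->
    (fg_wrt_embeddings C X <-> (X -> False)).
Proof.
move=> reflC isoC hausC [T [CT [[a [b [ab _]]] discT]]] X _.
split; last exact: empty_fg_wrt_embeddings.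
have pairC : has_discrete_pair C by exists T, a, b.
move=> fgX x; have [R [eta reta]] := reflC point; have [CR [ceta _]] := reta.
have eta_ab : eta pa = eta pb.
  exact: hausC R CR _ _ (continuous_cluster ceta pa_pb_cluster).
have [_ stage_uniq] := fgX _ _ _ _ _ _ index_directed
  (fun i => stage_in_C i reflC isoC pairC) stage_diagram (@stage_map_embedding)
  (reflection_colimit reta stage_colimit) (fun=> eta pa) (@cst_continuous _ _ _).
pose i0 : index := (exist _ set0 (list_finite0 _), 0%N).
have [j [h /(_ x) /(congr1 (@spoint j)) //]] := stage_uniq i0
  (fun=> stage_pa i0) (fun=> stage_pb i0) (@cst_continuous _ _ _)
  (@cst_continuous _ _ _) (fun=> erefl) (fun=> eta_ab).
Qed.
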